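(* For $\tau\in\mathbf{R}$, $L\geq1$ and $u\in\mathbf{C}$, let $B_{i\tau}(u)=\sum_{\ell\leq 2L,\ \ell\text{ prime}}\mathrm{sign}(d_{i\tau}(\ell))\,d_u(\ell)$. Then for $L$ large enough, $B_{i\tau}(it)\gg L/\log^6L$ uniformly for $t,\tau\in\mathbf{R}$ satisfying $|t-\tau|\ll 1/\log^7L$ and $|\tau|\leq L^{1/3}$.
   Context: $d_u(\ell)=\sum_{ab=\ell}(a/b)^u$, so for a prime $\ell$ and $\tau\in\mathbf{R}$, $d_{i\tau}(\ell)=\ell^{i\tau}+\ell^{-i\tau}=2\cos(\tau\log\ell)$ is real; $\mathrm{sign}$ denotes the sign of a real number. *)

From Stdlib Require Import Reals List ZArith Znumtheory Arith.
From Coquelicot Require Import Coquelicot.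
Open Scope R_scope.

Definition cpow (x : R) (u : C) : C :=
  (exp (Re u * ln x) * cos (Im u * ln x),
   exp (Re u * ln x) * sin (Im u * ln x)).

(* d_u(n) = sum_{ab = n} (a/b)^u, summing over the divisors a of n (b = n/a). *)
Definition d_fun (u : C) (n : nat) : C :=
  fold_right Cplus (RtoC 0)
    (map (fun a => if Nat.eq_dec (n mod a) 0
                   then cpow (INR a / INR (n / a)) u else RtoC 0)
         (seq 1 n)).

Definition sign (x : R) : R :=
  if Rlt_dec 0 x then 1 else if Rlt_dec x 0 then -1 else 0.

Definition is_primeb (n : nat) : bool :=
  if prime_dec (Z.of_nat n) then true else false.

(* B_{i tau}(u) = sum_{l <= 2L, l prime} sign(d_{i tau}(l)) d_u(l).
   d_{i tau}(l) is real for prime l; we take its real part. *)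
Definition B (tau L : R) (u : C) : C :=
  fold_right Cplus (RtoC 0)
    (map (fun l => if is_primeb l then
                     if Rle_dec (INR l) (2 * L)
                     then Cmult (RtoC (sign (Re (d_fun ((0%R, tau) : C) l))))
                                (d_fun u l)
                     else RtoC 0
                   else RtoC 0)
         (seq 0 (S (Z.to_nat (up (2 * L)))))).

(* For u = i t only the divisors 1 and p of a prime p contribute to d_u(p), so
   B_{i tau}(i t) is the real sum over p <= 2L of sign (cos (tau ln p)) 2 cos (t ln p).
   As cos is 1-Lipschitz, each term is at least 2 |cos (tau ln p)| - 2 |t - tau| ln p.
   Chebyshev's bound 2^n <= 'C(2n, n) <= (2n)^pi(2n) gives at least (L - 1) / (2 ln (2L))
   primes, whereas the integers l <= 2L with |cos (tau ln l)| < eps cluster in about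
   |tau| ln (2L) / pi exponential windows around the zeros of cos and number
   O(L eps ln L + |tau| ln L).  With eps = 1/(1000 ln^2 (2L)) and |tau| <= L^(1/3), most
   primes have |cos (tau ln p)| >= eps; they contribute >> L / ln^3 L, far more than
   the Lipschitz loss O(L |t - tau| ln L) = O(L / ln^6 L). *)

From Pilot Require Import Defs.
From Stdlib Require Import Reals Lia Lra ZArith Znumtheory List.
From Coquelicot Require Import Coquelicot.
From mathcomp Require Import ssreflect.
From mathcomp Require ssrfun ssrbool eqtype ssrnat seq div prime binomial bigop zify.

Module Chebyshev.
Import ssrfun ssrbool eqtype ssrnat seq div prime binomial bigop zify.
Local Open Scope nat_scope.

Lemma leq_divn_double a q : 0 < q -> (2 * a) %/ q <= 2 * (a %/ q) + 1.
Proof.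
move=> q_gt0; rewrite {1}(divn_eq a q) mulnDr mulnA divnMDl //.
have : (2 * (a %% q)) %/ q < 2 by rewrite ltn_divLR // ltn_pmul2l // ltn_pmod.
lia.
Qed.

Lemma logn_fact_sum p n N : prime p -> n <= N ->
  logn p n`! = \sum_(1 <= k < N.+1) n %/ p ^ k.
Proof.
move=> p_pr le_nN; rewrite logn_fact // [RHS](@big_cat_nat _ _ _ n.+1) //= ?ltnS //.
rewrite [X in _ + X]big_nat_cond [X in _ + X]big1 ?addn0 // => k /andP[/andP[lt_nk _] _].
by rewrite divn_small // (leq_trans lt_nk) // ltnW // ltn_expl // prime_gt1.
Qed.

(* In Legendre's formula for the exponent of p in (2n)!/(n!)^2, each term
   floor (2n/p^k) - 2 floor (n/p^k) is 0 or 1, and it vanishes once p^k > 2n. *)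
Lemma pfactor_bin_mid_le {p n} : prime p -> 0 < n -> p ^ logn p 'C(n.*2, n) <= n.*2.
Proof.
move=> p_pr n_gt0; have p_gt1 := prime_gt1 p_pr.
set m := trunc_log p n.*2.
apply: leq_trans (trunc_logP p_gt1 _ : p ^ m <= n.*2); last by lia.
rewrite leq_exp2l //.
have fact_bin : 'C(n.*2, n) * (n`! * n`!) = n.*2`!.
  by have := @bin_fact n.*2 n; rewrite -addnn addKn; apply; rewrite leq_addr.
have logn_fact_bin : logn p n.*2`! = logn p 'C(n.*2, n) + (logn p n`! + logn p n`!).
  by rewrite -fact_bin !lognM ?bin_gt0 ?muln_gt0 ?fact_gt0 //; lia.
rewrite (@logn_fact_sum p n.*2 n.*2) // (@logn_fact_sum p n n.*2) // in logn_fact_bin;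
  last by lia.
set S := \sum_(1 <= k < n.*2.+1) n %/ p ^ k in logn_fact_bin.
have le_sum : \sum_(1 <= k < n.*2.+1) n.*2 %/ p ^ k <=
              \sum_(1 <= k < n.*2.+1) (2 * (n %/ p ^ k) + (if k <= m then 1 else 0)).
  apply: leq_sum => k _; case: (leqP k m) => [_|lt_mk].
    by rewrite -muln2 mulnC leq_divn_double // expn_gt0; lia.
  rewrite divn_small ?addn0 // ltnNge; apply/negP => /(trunc_log_max p_gt1).
  by rewrite -/m leqNgt lt_mk.
rewrite big_split /= -big_distrr /= -/S -big_mkcond /= sum1_count in le_sum.
have count_le : count (fun k => k <= m) (index_iota 1 n.*2.+1) <= m.
  rewrite -size_filter -[m in _ <= m](size_iota 1).
  apply: uniq_leq_size => [|k]; first exact/filter_uniq/iota_uniq.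
  by rewrite mem_filter mem_index_iota mem_iota; lia.
lia.
Qed.

Lemma exp2_le_bin_mid n : 2 ^ n <= 'C(n.*2, n).
Proof.
elim: n => [|n IHn] //.
have le_bin : 'C(n.*2, n) <= 'C(n.*2.+1, n) by case: n {IHn} => [|k] //; rewrite binS; lia.
have bin_sym : 'C(n.*2.+1, n.+1) = 'C(n.*2.+1, n).
  by have := @bin_sub n.*2.+1 n; rewrite -addnn -addSn addnK; apply; lia.
rewrite doubleS binS bin_sym expnS; lia.
Qed.

Lemma is_primeb_prime p : prime p -> is_primeb p.
Proof.
move=> /primeP[p_gt1 dvd_p]; rewrite /is_primeb.
case: prime_dec => // -[]; apply/prime_alt; split; first lia.
move=> d d_range [z def_p].
have d_dvd : Z.to_nat d %| p by apply/dvdnP; exists (Z.to_nat z); lia.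
by case/dvd_p/orP: d_dvd => /eqP; lia.
Qed.

(* Chebyshev: 'C(2n, n) is a product of prime powers, each at most 2n, over
   primes at most 2n. *)
Lemma exp2_le_prime_count n : 0 < n ->
  2 ^ n <= n.*2 ^ count is_primeb (iota 0 n.*2.+1).
Proof.
move=> n_gt0; apply: leq_trans (exp2_le_bin_mid n) _.
have bin_gt0 : 0 < 'C(n.*2, n) by rewrite bin_gt0; lia.
rewrite {1}(prod_prime_decomp bin_gt0) prime_decompE big_map /= big_seq.
apply: leq_trans (leq_prod (E2 := fun _ => n.*2) _) _.
  by move=> p; rewrite mem_primes => /andP[p_pr _]; apply: pfactor_bin_mid_le.
rewrite -big_seq big_const_seq count_predT iter_muln_1 leq_exp2l; last lia.
rewrite -size_filter; apply: uniq_leq_size; first exact: primes_uniq.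
move=> p p_div; have := p_div; rewrite mem_primes => /andP[p_pr _].
rewrite mem_filter is_primeb_prime //= mem_iota /= ltnS prime_gt0 //=.
have le_pfactor : p <= p ^ logn p 'C(n.*2, n).
  by rewrite -{1}(expn1 p) leq_exp2l ?prime_gt1 // logn_gt0.
exact: leq_trans le_pfactor (pfactor_bin_mid_le p_pr n_gt0).
Qed.

Lemma expn_pow m n : m ^ n = Nat.pow m n.
Proof. by elim: n => //= n IHn; rewrite expnS IHn mulnE. Qed.

Lemma count_iota_length (a : pred nat) m n :
  count a (iota m n) = length (List.filter a (List.seq m n)).
Proof. by elim: n m => //= n IHn m; rewrite IHn; case: (a m). Qed.

Lemma pow2_le_pow_prime_count n : (0 < n)%coq_nat ->
  (Nat.pow 2 n <= Nat.pow (Nat.mul 2 n)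
     (length (List.filter is_primeb (List.seq 0 (Nat.add (Nat.mul 2 n) 1)))))%coq_nat.
Proof.
move=> /ltP n_gt0; apply/leP; rewrite -!expn_pow -count_iota_length.
have -> : Nat.add (Nat.mul 2 n) 1 = n.*2.+1 by lia.
have -> : Nat.mul 2 n = n.*2 by lia.
exact: exp2_le_prime_count.
Qed.

End Chebyshev.

From mathcomp Require Import ssrbool.
Open Scope R_scope.

Definition rsum (s : list nat) (f : nat -> R) : R := fold_right Rplus 0 (map f s).

Lemma rsum_cons a s f : rsum (a :: s) f = f a + rsum s f.
Proof. by []. Qed.

Lemma rsum_app s1 s2 f : rsum (s1 ++ s2) f = rsum s1 f + rsum s2 f.
Proof. elim: s1 => [|a s IH] /=; first by rewrite /rsum /=; lra. by rewrite !rsum_cons IH; lra. Qed.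

Lemma rsum_ext s f g : (forall x, In x s -> f x = g x) -> rsum s f = rsum s g.
Proof. by move=> fg; rewrite /rsum (map_ext_in f g s fg). Qed.

Lemma rsum_le s f g : (forall x, In x s -> f x <= g x) -> rsum s f <= rsum s g.
Proof.
elim: s => [|a s IH] fg; first exact: Rle_refl.
rewrite !rsum_cons; apply: Rplus_le_compat; [apply: fg | apply: IH => x sx; apply: fg];
  simpl; auto.
Qed.

Lemma rsum_plus s f g : rsum s (fun x => f x + g x) = rsum s f + rsum s g.
Proof. elim: s => [|a s IH]; first by rewrite /rsum /=; lra. by rewrite !rsum_cons IH; lra. Qed.

Lemma rsum_scal s c f : rsum s (fun x => c * f x) = c * rsum s f.
Proof. elim: s => [|a s IH]; first by rewrite /rsum /=; lra. by rewrite !rsum_cons IH; lra. Qed.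

Lemma rsum_const s c : rsum s (fun _ => c) = c * INR (length s).
Proof.
elim: s => [|a s IH]; first by rewrite /rsum /=; lra.
by rewrite rsum_cons IH; change (length (a :: s)) with (S (length s)); rewrite S_INR; ring.
Qed.

Lemma rsum_zero s : rsum s (fun _ => 0) = 0.
Proof. by rewrite rsum_const Rmult_0_l. Qed.

Lemma rsum_nonneg s f : (forall x, In x s -> 0 <= f x) -> 0 <= rsum s f.
Proof. by move=> f_ge0; rewrite -(rsum_zero s); apply: rsum_le. Qed.

Lemma rsum_ge_term s f k : In k s -> (forall x, In x s -> 0 <= f x) -> f k <= rsum s f.
Proof.
elim: s => [|a s IH] //= [<-|sk] f_ge0; rewrite rsum_cons.
  by have := rsum_nonneg s f (fun x sx => f_ge0 x (or_intror sx)); lra.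
have := IH sk (fun x sx => f_ge0 x (or_intror sx)); have := f_ge0 a (or_introl eq_refl); lra.
Qed.

Lemma rsum_swap s1 s2 (F : nat -> nat -> R) :
  rsum s1 (fun x => rsum s2 (F x)) = rsum s2 (fun y => rsum s1 (fun x => F x y)).
Proof.
elim: s1 => [|a s IH]; first by symmetry; apply: rsum_zero.
by rewrite rsum_cons IH -rsum_plus.
Qed.

Lemma rsum_count (a : nat -> bool) s :
  rsum s (fun x => if a x then 1 else 0) = INR (length (filter a s)).
Proof.
elim: s => [|x s IH] //=; rewrite rsum_cons IH; case: (a x); last lra.
by change (length (x :: filter a s)) with (S (length (filter a s))); rewrite S_INR; lra.
Qed.

Lemma Re_fold s (f : nat -> C) :
  Re (fold_right Cplus (RtoC 0) (map f s)) = rsum s (fun x => Re (f x)).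
Proof. by elim: s => [|a s IH] //=; rewrite rsum_cons -IH. Qed.

Lemma Im_fold s (f : nat -> C) :
  Im (fold_right Cplus (RtoC 0) (map f s)) = rsum s (fun x => Im (f x)).
Proof. by elim: s => [|a s IH] //=; rewrite rsum_cons -IH. Qed.

Lemma is_primeb_ge2 l : is_primeb l -> (2 <= l)%nat.
Proof. by rewrite /is_primeb; case: prime_dec => // /prime_ge_2; lia. Qed.

Lemma is_primeb_mod l a : is_primeb l -> (1 < a < l)%nat -> (l mod a <> 0)%nat.
Proof.
rewrite /is_primeb; case: prime_dec => // /prime_alt[_ no_div] _ a_range l_mod.
apply: (no_div (Z.of_nat a)); first lia.
by exists (Z.of_nat (l / a)); have := Nat.div_mod_eq l a; rewrite l_mod; lia.
Qed.

Lemma fold_Cplus_zero (h : nat -> C) s z : (forall a, In a s -> h a = RtoC 0) ->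
  fold_right Cplus z (map h s) = z.
Proof.
elim: s => [|a s IH] //= h0; rewrite IH ?h0 /=; auto; first exact: Cplus_0_l.
Qed.

Lemma fold_divisors_prime l (G : nat -> C) : is_primeb l ->
  fold_right Cplus (RtoC 0)
    (map (fun a => match Nat.eq_dec (l mod a) 0 with left _ => G a | right _ => RtoC 0 end)
         (seq 1 l))
  = Cplus (G 1%nat) (G l).
Proof.
move=> l_pr; have := is_primeb_ge2 l l_pr; case: l l_pr => [|[|k]] l_pr l_ge2; try lia.
change (seq 1 (S (S k))) with (1%nat :: seq 2 (S k)).
rewrite seq_S map_cons map_app; cbn [fold_right]; rewrite fold_right_app; cbn [fold_right map].
replace (2 + k)%nat with (S (S k)) by lia.
rewrite fold_Cplus_zero.
- rewrite Nat.mod_1_r Nat.Div0.mod_same.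
  by case: (Nat.eq_dec 0 0) => //= _; rewrite Cplus_0_r.
- move=> a /in_seq a_range; case: Nat.eq_dec => // l_mod.
  by case: (is_primeb_mod _ a l_pr); lia.
Qed.

Lemma cpow_imag x t : cpow x (0, t) = (cos (t * ln x), sin (t * ln x)).
Proof. by rewrite /cpow /= Rmult_0_l exp_0 !Rmult_1_l. Qed.

Lemma d_fun_imag_prime l t : is_primeb l ->
  d_fun (0, t) l = RtoC (2 * cos (t * ln (INR l))).
Proof.
move=> l_pr; have l_ge2 := is_primeb_ge2 l l_pr.
have l_pos : 0 < INR l by apply: lt_0_INR; lia.
have := fold_divisors_prime l (fun a => cpow (INR a / INR (l / a)) (0, t)) l_pr.
cbv beta; rewrite /d_fun => ->.
rewrite Nat.div_1_r Nat.div_same; last lia.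
rewrite !cpow_imag /Rdiv Rinv_1 Rmult_1_r Rmult_1_l ln_Rinv //.
rewrite -Ropp_mult_distr_r cos_neg sin_neg.
by apply: injective_projections => /=; ring.
Qed.

Definition B_term (tau t L : R) (l : nat) : R :=
  if is_primeb l then
    if Rle_dec (INR l) (2 * L)
    then Defs.sign (2 * cos (tau * ln (INR l))) * (2 * cos (t * ln (INR l)))
    else 0
  else 0.

Lemma B_imag_eq_rsum tau L t :
  B tau L (0, t) = RtoC (rsum (seq 0 (S (Z.to_nat (up (2 * L))))) (B_term tau t L)).
Proof.
apply: injective_projections; rewrite [RHS]/=.
- rewrite -[fst _]/(Re _) /B Re_fold; apply: rsum_ext => l _; rewrite /B_term.
  case l_pr: (is_primeb l) => //; case: Rle_dec => // le_l2L.
  by rewrite !d_fun_imag_prime //=; ring.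
- rewrite -[snd _]/(Im _) /B Im_fold (rsum_ext _ _ (fun _ => 0)) ?rsum_zero // => l _.
  case l_pr: (is_primeb l) => //; case: Rle_dec => // le_l2L.
  by rewrite !d_fun_imag_prime //=; ring.
Qed.

Lemma Rabs_sin_le x : Rabs (sin x) <= Rabs x.
Proof.
wlog x_ge0 : x / 0 <= x.
  move=> le_pos; case: (Rle_dec 0 x) => [|/Rnot_le_lt x_lt0]; first exact: le_pos.
  by rewrite -Rabs_Ropp -(Rabs_Ropp x) -sin_neg; apply: le_pos; lra.
rewrite (Rabs_right x); last lra.
case: x_ge0 => [x_gt0|<-]; last by rewrite sin_0 Rabs_R0; lra.
have sin_lt := sin_lt_x x x_gt0; have sin_bd := SIN_bound x; have pi_gt := PI2_1.
case: (Rle_dec 1 x) => [le1x|lt_x1]; first by apply: Rabs_le; lra.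
by rewrite Rabs_right; [lra | apply/Rle_ge/sin_ge_0; lra].
Qed.

Lemma Rabs_cos_sub_le a b : Rabs (cos a - cos b) <= Rabs (a - b).
Proof.
rewrite form2 !Rabs_mult Rabs_Ropp (Rabs_right 2); last lra.
have sin_diff := Rabs_sin_le ((a - b) / 2).
have sin_sum : Rabs (sin ((a + b) / 2)) <= 1 by apply: Rabs_le; apply: SIN_bound.
rewrite /Rdiv Rabs_mult Rabs_inv (Rabs_right 2) in sin_diff; last lra.
have := Rmult_le_compat _ _ _ _ (Rabs_pos _) (Rabs_pos _) sin_diff sin_sum; lra.
Qed.

Lemma sign_mul_ge c c' : 2 * Rabs c - 2 * Rabs (c - c') <= Defs.sign (2 * c) * (2 * c').
Proof.
rewrite /Defs.sign; case: Rlt_dec => [c_pos|c_npos]; last case: Rlt_dec => [c_neg|c_nneg].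
- by rewrite (Rabs_right c); [have := Rle_abs (c - c'); lra | lra].
- by rewrite (Rabs_left c); last lra; rewrite Rabs_minus_sym; have := Rle_abs (c' - c); lra.
- have -> : c = 0 by lra.
  by rewrite Rabs_R0 Rminus_0_l Rabs_Ropp; have := Rabs_pos c'; lra.
Qed.

Lemma cos_ge_half x : 0 <= x <= 1 -> 1 / 2 <= cos x.
Proof.
move=> x_range; have -> : x = 2 * (x / 2) by field.
rewrite cos_2a_sin; have := Rabs_sin_le (x / 2); rewrite (Rabs_right (x / 2)); last lra.
move=> /Rabs_le_between sin_bd; nra.
Qed.

Lemma sin_ge_half_id z : 0 <= z <= 1 -> z / 2 <= sin z.
Proof.
move=> z_range; have pi_gt := PI2_1.
have [sin_lb _] := sin_bound z 0 ltac:(lra) ltac:(lra).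
rewrite /sin_approx /sin_term /= in sin_lb; nra.
Qed.

Lemma cos_small_near_zero x eps : 0 <= x < PI -> eps <= 1 / 2 -> Rabs (cos x) < eps ->
  Rabs (x - PI / 2) < 2 * eps.
Proof.
move=> x_range eps_le; rewrite -sin_shift Rabs_minus_sym.
set y := PI / 2 - x; have := PI2_1 => pi_gt.
have y_bounds : - (PI / 2) < y <= PI / 2 by rewrite /y; lra.
have y_range : Rabs y <= PI / 2 by apply: Rabs_le; lra.
have -> : Rabs (sin y) = sin (Rabs y).
  case: (Rle_dec 0 y) => [y_ge0|/Rnot_le_lt y_lt0].
    rewrite (Rabs_right y); last lra.
    by rewrite Rabs_right //; apply/Rle_ge/sin_ge_0; lra.
  by rewrite (Rabs_left y) // sin_neg Rabs_left //; apply: sin_lt_0_var; lra.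
case: (Rle_dec (Rabs y) 1) => [y_le1|y_gt1].
  by have := sin_ge_half_id (Rabs y) (conj (Rabs_pos y) y_le1); lra.
have := sin_ge_half_id 1 ltac:(lra); have : sin 1 <= sin (Rabs y) by apply: sin_incr_1; lra.
lra.
Qed.

Lemma exp_le_1_add_2x x : 0 <= x <= 1 / 2 -> exp x <= 1 + 2 * x.
Proof.
move=> x_range; have := exp_ineq1_le (- x); have := exp_pos x.
have : exp x * exp (- x) = 1 by rewrite -exp_plus Rplus_opp_r exp_0.
nra.
Qed.

Lemma Rabs_cos_sub_mulPI th k : Rabs (cos (th - INR k * PI)) = Rabs (cos th).
Proof.
elim: k => [|k IH]; first by rewrite Rmult_0_l Rminus_0_r.
rewrite S_INR -IH; have -> : th - (INR k + 1) * PI = th - INR k * PI - PI by ring.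
by rewrite cos_minus cos_PI sin_PI -Rabs_Ropp; f_equal; ring.
Qed.

Lemma up_nat r : 0 <= r -> INR (Z.to_nat (up r)) = IZR (up r) /\ r < IZR (up r) <= r + 1.
Proof.
move=> r_ge0; have [up_gt up_le] := archimed r.
have up_pos : (0 < up r)%Z by apply: lt_IZR; lra.
by rewrite INR_IZR_INZ Z2Nat.id; [split; lra | lia].
Qed.

Lemma floor_nat r : 0 <= r -> exists k, INR k <= r < INR k + 1.
Proof.
move=> r_ge0; have [up_gt up_le] := archimed r.
have up_pos : (0 < up r)%Z by apply: lt_IZR; lra.
exists (Z.to_nat (up r - 1)); rewrite INR_IZR_INZ Z2Nat.id ?minus_IZR /=; lra || lia.
Qed.

Definition Rleb (x y : R) : bool := if Rle_dec x y then true else false.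
Definition Rltb (x y : R) : bool := if Rlt_dec x y then true else false.

Lemma RlebP x y : reflect (x <= y) (Rleb x y).
Proof. by rewrite /Rleb; case: Rle_dec => xy; constructor. Qed.

Lemma RltbP x y : reflect (x < y) (Rltb x y).
Proof. by rewrite /Rltb; case: Rlt_dec => xy; constructor. Qed.

Lemma indicator_ge0 (b : bool) : 0 <= (if b then 1 else 0).
Proof. by case: b; lra. Qed.

Lemma count_nat_in_interval a b s m :
  rsum (seq s m) (fun l => if Rleb a (INR l) && Rleb (INR l) b then 1 else 0)
  <= Rmax 0 (b - a + 1).
Proof.
suff : rsum (seq s m) (fun l => if Rleb a (INR l) && Rleb (INR l) b then 1 else 0)
       <= Rmax 0 (b - Rmax a (INR s) + 1).
  by rewrite /Rmax; repeat case: Rle_dec; lra.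
elim: m s => [|m IH] s; first exact: Rmax_l.
rewrite [seq _ _]/= rsum_cons; have := IH (S s); rewrite S_INR.
case: RlebP => ?; case: RlebP => ? /=; rewrite /Rmax; repeat case: Rle_dec; lra.
Qed.

Definition window_start (T eps : R) (k : nat) : R := exp ((INR k * PI + PI / 2 - 2 * eps) / T).

(* T ln x lies within 2 eps of a zero k pi + pi/2 of cos. *)
Lemma cos_small_in_window T eps x : 0 < T -> 1 <= x -> eps <= 1 / 2 ->
  Rabs (cos (T * ln x)) < eps ->
  exists k : nat, INR k * PI <= T * ln x /\
    window_start T eps k <= x <= window_start T eps k * exp (4 * eps / T).
Proof.
move=> T_pos x_ge1 eps_le cos_small; have pi_pos := PI_RGT_0.
set th := T * ln x in cos_small *.
have th_ge0 : 0 <= th by apply: Rmult_le_pos; [lra | rewrite -ln_1; apply: ln_le; lra].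
have [k [k_le k_gt]] := floor_nat (th / PI) (Rdiv_le_0_compat _ _ th_ge0 pi_pos).
have th_eq : th = th / PI * PI by field; lra.
have k_range : 0 <= th - INR k * PI < PI by split; rewrite {1}th_eq; nra.
have := cos_small_near_zero _ eps k_range eps_le; rewrite Rabs_cos_sub_mulPI.
move=> /(_ cos_small) /Rabs_def2 near_zero.
have x_eq : x = exp (th / T).
  by rewrite /th /Rdiv Rmult_comm -Rmult_assoc Rinv_l ?Rmult_1_l ?exp_ln; lra.
exists k; split; first by nra.
rewrite x_eq /window_start -exp_plus; split; apply/Rlt_le/exp_increasing.
  by apply: Rmult_lt_compat_r; [apply: Rinv_0_lt_compat | ]; lra.
have -> : (INR k * PI + PI / 2 - 2 * eps) / T + 4 * eps / T
          = (INR k * PI + PI / 2 + 2 * eps) / T by field; lra.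
by apply: Rmult_lt_compat_r; [apply: Rinv_0_lt_compat | ]; lra.
Qed.

(* Counts integers, not only primes; 1 <= l keeps ln l >= 0. *)
Definition cos_small_ind (T L eps : R) (l : nat) : R :=
  if (1 <=? l)%nat && Rleb (INR l) (2 * L) && Rltb (Rabs (cos (T * ln (INR l)))) eps
  then 1 else 0.

Definition window_ind (T L eps : R) (k l : nat) : R :=
  if Rleb (window_start T eps k) (INR l)
     && Rleb (INR l) (Rmin (window_start T eps k * exp (4 * eps / T)) (2 * L))
  then 1 else 0.

Lemma cos_small_ind_le_windows T L eps l : 0 < T -> 1 <= L -> eps <= 1 / 2 ->
  cos_small_ind T L eps l
  <= rsum (seq 0 (Z.to_nat (up (T * ln (2 * L) / PI)))) (fun k => window_ind T L eps k l).
Proof.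
move=> T_pos L_ge1 eps_le; have pi_pos := PI_RGT_0.
set K := Z.to_nat _; have sum_ge0 : 0 <= rsum (seq 0 K) (fun k => window_ind T L eps k l).
  by apply: rsum_nonneg => k _; apply: indicator_ge0.
rewrite /cos_small_ind; case: (Nat.leb_spec 1 l) => /= [l_ge1|_]; last exact: sum_ge0.
case: RlebP => /= [l_le|_]; last exact: sum_ge0.
case: RltbP => [cos_small|_]; last exact: sum_ge0.
have l_ge1' : 1 <= INR l by rewrite -INR_1; apply: le_INR.
have ln_l_le : ln (INR l) <= ln (2 * L) by apply: ln_le; lra.
have [k [k_le [win_lo win_hi]]] := cos_small_in_window T eps (INR l) T_pos l_ge1' eps_le cos_small.
have k_lt : (k < K)%nat.
  have windows_ge0 : 0 <= T * ln (2 * L) / PI.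
    by apply: Rdiv_le_0_compat => //; apply: Rmult_le_pos; [lra | rewrite -ln_1; apply: ln_le; lra].
  have [K_eq [K_gt _]] := up_nat _ windows_ge0.
  apply: INR_lt; rewrite K_eq; apply: Rle_lt_trans K_gt.
  apply: (Rmult_le_reg_r PI) => //; rewrite /Rdiv Rmult_assoc Rinv_l; nra.
apply: Rle_trans (rsum_ge_term _ (fun k => window_ind T L eps k l) k _ _); last first.
- by move=> j _; apply: indicator_ge0.
- by apply/in_seq; lia.
rewrite /window_ind; case: RlebP => [_|[] //]; case: RlebP => [_|[]] /=; first lra.
by apply: Rmin_glb.
Qed.

Lemma window_count_le T L eps k M : 1 <= L -> 0 <= 4 * eps / T ->
  rsum (seq 0 M) (window_ind T L eps k) <= 2 * L * (exp (4 * eps / T) - 1) + 1.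
Proof.
move=> L_ge1 ratio_ge0; apply: Rle_trans (count_nat_in_interval _ _ 0 M) _.
set A := window_start T eps k; set E := exp (4 * eps / T).
have E_ge1 : 1 <= E by have := exp_ineq1_le (4 * eps / T); rewrite /E; lra.
have excess_ge0 : 0 <= 2 * L * (E - 1) by apply: Rmult_le_pos; lra.
have window_len : A * E - A <= 2 * L * (E - 1) \/ 2 * L < A.
  case: (Rle_dec A (2 * L)) => [A_le|A_gt]; last by right; lra.
  by left; have := Rmult_le_compat_r (E - 1) _ _ ltac:(lra) A_le; lra.
have A_le_AE : A <= A * E.
  by rewrite -{1}(Rmult_1_r A); apply: Rmult_le_compat_l; [apply/Rlt_le/exp_pos | lra].
rewrite /Rmax /Rmin; repeat case: Rle_dec; lra.
Qed.

(* About T ln (2L) / pi windows, each holding at most 2L (exp (4 eps / T) - 1) + 1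
   integers. *)
Lemma cos_small_count_windows T L eps M : 0 < T -> 1 <= L -> 0 < eps <= 1 / 2 ->
  4 * eps / T <= 1 / 2 ->
  rsum (seq 0 M) (cos_small_ind T L eps)
  <= (T * ln (2 * L) / PI + 1) * (2 * L * (8 * eps / T) + 1).
Proof.
move=> T_pos L_ge1 eps_range ratio_le.
have ratio_ge0 : 0 <= 4 * eps / T by apply: Rdiv_le_0_compat; lra.
have windows_ge0 : 0 <= T * ln (2 * L) / PI.
  apply: Rdiv_le_0_compat; last exact: PI_RGT_0.
  by apply: Rmult_le_pos; [lra | rewrite -ln_1; apply: ln_le; lra].
have [K_eq K_range] := up_nat _ windows_ge0.
have E_le : exp (4 * eps / T) - 1 <= 8 * eps / T by have := exp_le_1_add_2x (4 * eps / T); lra.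
have excess_le : 0 <= 2 * L * (exp (4 * eps / T) - 1) <= 2 * L * (8 * eps / T).
  split; last by apply: Rmult_le_compat_l; lra.
  by apply: Rmult_le_pos; have := exp_ineq1_le (4 * eps / T); lra.
have covered l := cos_small_ind_le_windows T L eps l T_pos L_ge1 ltac:(lra).
apply: Rle_trans (rsum_le _ _ _ (fun l _ => covered l)) _; rewrite rsum_swap.
apply: Rle_trans (rsum_le _ _ _ (fun k _ => window_count_le T L eps k M L_ge1 ratio_ge0)) _.
by rewrite rsum_const length_seq K_eq Rmult_comm; apply: Rmult_le_compat; lra.
Qed.

Lemma cos_small_count_zero T L eps M : 0 <= T -> 1 <= L -> eps < 1 / 2 ->
  T * ln (2 * L) <= 1 -> rsum (seq 0 M) (cos_small_ind T L eps) = 0.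
Proof.
move=> T_ge0 L_ge1 eps_lt T_small; rewrite -(rsum_zero (seq 0 M)); apply: rsum_ext => l _.
rewrite /cos_small_ind; case: (Nat.leb_spec 1 l) => //= l_ge1.
case: RlebP => //= l_le; case: RltbP => // cos_lt.
have l_ge1' : 1 <= INR l by rewrite -INR_1; apply: le_INR.
have ln_ge0 : 0 <= ln (INR l) by rewrite -ln_1; apply: ln_le; lra.
have ln_le : ln (INR l) <= ln (2 * L) by apply: ln_le; lra.
have arg_le := Rmult_le_compat_l T _ _ T_ge0 ln_le.
have arg_ge0 := Rmult_le_pos _ _ T_ge0 ln_ge0.
have cos_ge := cos_ge_half (T * ln (INR l)) ltac:(lra).
by rewrite Rabs_right in cos_lt; lra.
Qed.

Lemma cos_small_count_le T L eps M : 0 <= T -> 1 <= L -> 0 < eps ->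
  8 * eps * ln (2 * L) <= 1 ->
  rsum (seq 0 M) (cos_small_ind T L eps) <= 32 * L * eps * ln (2 * L) + T * ln (2 * L) + 1.
Proof.
move=> T_ge0 L_ge1 eps_pos eps_small; set ell := ln (2 * L) in eps_small *.
have ell_gt : / 2 < ell.
  have ln2_le : ln 2 <= ell by apply: ln_le; lra.
  by have := ln_lt_2; lra.
have L_eps_ell : 0 <= L * eps * ell by apply: Rmult_le_pos; [apply: Rmult_le_pos |]; lra.
case: (Rle_dec (T * ell) 1) => [T_small|/Rnot_le_lt T_large].
  rewrite cos_small_count_zero //; [nra | nra].
have T_pos : 0 < T by nra.
have T_inv : / T < ell by apply: (Rmult_lt_reg_l T) => //; rewrite Rinv_r; lra.
apply: Rle_trans (cos_small_count_windows T L eps M T_pos L_ge1 _ _) _.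
- by split; nra.
- by rewrite /Rdiv; have := Rmult_le_compat_l (4 * eps) _ _ ltac:(lra) (Rlt_le _ _ T_inv); lra.
have pi_gt1 : 1 < PI by have := PI2_1; lra.
have div_pi_le : forall x, 0 <= x -> x / PI <= x.
  move=> x x_ge0; apply: (Rmult_le_reg_r PI); first lra.
  by rewrite /Rdiv Rmult_assoc Rinv_l; nra.
have -> : (T * ell / PI + 1) * (2 * L * (8 * eps / T) + 1)
          = 16 * (L * eps * ell) / PI + T * ell / PI + 16 * (L * eps) * / T + 1.
  by field; lra.
have := div_pi_le _ (Rmult_le_pos 16 _ ltac:(lra) L_eps_ell).
have := div_pi_le _ (Rmult_le_pos T ell T_ge0 ltac:(lra)).
have : L * eps * / T <= L * eps * ell by apply: Rmult_le_compat_l; [apply: Rmult_le_pos | ]; lra.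
lra.
Qed.

Definition prime_ind (L : R) (l : nat) : R :=
  if is_primeb l && Rleb (INR l) (2 * L) then 1 else 0.

Lemma prime_count_double_ge n : (1 <= n)%nat ->
  INR n / 2 <= INR (length (filter is_primeb (seq 0 (2 * n + 1)))) * ln (INR (2 * n)).
Proof.
move=> n_ge1; set P := length _.
have cheb := Chebyshev.pow2_le_pow_prime_count n ltac:(lia).
move/le_INR: cheb; rewrite !pow_INR -/P [INR 2]/= => cheb.
have two_n_gt1 : 1 < INR (2 * n) by rewrite -INR_1; apply: lt_INR; lia.
have := ln_le _ _ (pow_lt 2 n ltac:(lra)) cheb; rewrite !ln_pow; try lra.
have := ln_lt_2; have := pos_INR n; have := pos_INR P.
have : 0 < ln (INR (2 * n)).
  by rewrite -ln_1; apply: ln_increasing; lra.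
nra.
Qed.

Lemma prime_count_ge L : 3 <= L ->
  (L - 1) / (2 * ln (2 * L)) <= rsum (seq 0 (S (Z.to_nat (up (2 * L))))) (prime_ind L).
Proof.
move=> L_ge3; have [n [n_le n_gt]] := floor_nat L ltac:(lra).
have n_ge2 : (2 <= n)%nat by apply: INR_le; rewrite [INR 2]/=; lra.
have [N_eq [N_gt _]] := up_nat (2 * L) ltac:(lra).
set N := Z.to_nat _ in N_eq *.
have two_n_lt : (2 * n < N)%nat by apply: INR_lt; rewrite N_eq mult_INR [INR 2]/=; lra.
have -> : seq 0 (S N) = seq 0 (2 * n + 1) ++ seq (2 * n + 1) (S N - (2 * n + 1)).
  by rewrite -seq_app; f_equal; lia.
rewrite rsum_app.
have := rsum_nonneg (seq (2 * n + 1) (S N - (2 * n + 1))) (prime_ind L)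
          (fun l _ => indicator_ge0 _).
have -> : rsum (seq 0 (2 * n + 1)) (prime_ind L)
          = INR (length (filter is_primeb (seq 0 (2 * n + 1)))).
  rewrite -rsum_count; apply: rsum_ext => l /in_seq l_range; rewrite /prime_ind.
  have : INR l <= 2 * L by have := le_INR l (2 * n) ltac:(lia); rewrite mult_INR [INR 2]/=; lra.
  by case: RlebP => // _; rewrite andbT.
have := prime_count_double_ge n ltac:(lia).
have ln_le : ln (INR (2 * n)) <= ln (2 * L).
  by apply: ln_le; rewrite mult_INR [INR 2]/=; lra.
have ln_pos : 0 < ln (2 * L) by rewrite -ln_1; apply: ln_increasing; lra.
move=> count_ge sum_ge0.
apply: (Rmult_le_reg_r (2 * ln (2 * L))); first lra.
rewrite /Rdiv Rmult_assoc Rinv_l; last lra.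
have := Rmult_le_compat_l _ _ _ (pos_INR (length (filter is_primeb (seq 0 (2 * n + 1))))) ln_le.
have := Rmult_le_pos _ _ sum_ge0 (Rlt_le _ _ ln_pos).
lra.
Qed.

Definition cos_large_prime_ind (tau L eps : R) (l : nat) : R :=
  if is_primeb l && Rleb (INR l) (2 * L) && Rleb eps (Rabs (cos (tau * ln (INR l))))
  then 1 else 0.

Lemma prime_ind_le tau L eps l :
  prime_ind L l <= cos_large_prime_ind tau L eps l + cos_small_ind (Rabs tau) L eps l.
Proof.
have small_ge0 : 0 <= cos_small_ind (Rabs tau) L eps l by apply: indicator_ge0.
rewrite /prime_ind /cos_large_prime_ind.
case l_pr: (is_primeb l) => /=; first case: RlebP => /= [l_le|_]; try lra.
have l_ge1 : (1 <= l)%nat by have := is_primeb_ge2 l l_pr; lia.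
rewrite /cos_small_ind (proj2 (Nat.leb_le 1 l) l_ge1) (introT (RlebP _ _) l_le) /=.
have -> : Rabs (cos (Rabs tau * ln (INR l))) = Rabs (cos (tau * ln (INR l))).
  case: (Rle_dec 0 tau) => [tau_ge0|/Rnot_le_lt tau_lt0]; first by rewrite (Rabs_right tau); lra.
  by rewrite (Rabs_left tau) // Ropp_mult_distr_l_reverse cos_neg.
by case: RlebP => ?; case: RltbP => ? /=; lra.
Qed.

(* The sign is chosen for tau, but the term is evaluated at t: the loss is the
   Lipschitz bound |cos (tau ln l) - cos (t ln l)| <= |t - tau| ln l. *)
Lemma B_term_ge tau t L eps l : 1 <= L ->
  2 * eps * cos_large_prime_ind tau L eps l - 2 * (Rabs (t - tau) * ln (2 * L))
  <= B_term tau t L l.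
Proof.
move=> L_ge1; have ln2L_ge0 : 0 <= ln (2 * L) by rewrite -ln_1; apply: ln_le; lra.
have loss_ge0 := Rmult_le_pos _ _ (Rabs_pos (t - tau)) ln2L_ge0.
rewrite /B_term /cos_large_prime_ind; case l_pr: (is_primeb l) => /=; last lra.
case: Rle_dec => [l_le|l_gt]; last by case: RlebP => //= _; lra.
case: RlebP => //= _.
have l_ge1 : 1 <= INR l by rewrite -INR_1; apply: le_INR; have := is_primeb_ge2 l l_pr; lia.
have ln_ge0 : 0 <= ln (INR l) by rewrite -ln_1; apply: ln_le; lra.
have ln_l_le : ln (INR l) <= ln (2 * L) by apply: ln_le; lra.
have := sign_mul_ge (cos (tau * ln (INR l))) (cos (t * ln (INR l))).
have := Rabs_cos_sub_le (tau * ln (INR l)) (t * ln (INR l)).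
rewrite -Rmult_minus_distr_r Rabs_mult (Rabs_right (ln (INR l))) 1?(Rabs_minus_sym tau t); last lra.
have := Rmult_le_compat_l _ _ _ (Rabs_pos (t - tau)) ln_l_le.
have := Rabs_pos (cos (tau * ln (INR l))).
by case: RlebP => ? /=; lra.
Qed.

Lemma B_sum_ge tau t L eps : 2 <= L ->
  2 * eps * rsum (seq 0 (S (Z.to_nat (up (2 * L))))) (cos_large_prime_ind tau L eps)
  - 6 * L * (Rabs (t - tau) * ln (2 * L))
  <= rsum (seq 0 (S (Z.to_nat (up (2 * L))))) (B_term tau t L).
Proof.
move=> L_ge2; set range := seq 0 _.
have ln_ge0 : 0 <= ln (2 * L) by rewrite -ln_1; apply: ln_le; lra.
have loss_ge0 := Rmult_le_pos _ _ (Rabs_pos (t - tau)) ln_ge0.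
have len_le : INR (length range) <= 3 * L.
  by rewrite length_seq S_INR; have [-> [_ ?]] := up_nat (2 * L) ltac:(lra); lra.
apply: Rle_trans (rsum_le _ _ _ (fun l _ => B_term_ge tau t L eps l ltac:(lra))).
rewrite (rsum_plus range (fun l => 2 * eps * cos_large_prime_ind tau L eps l)
                     (fun _ => - (2 * (Rabs (t - tau) * ln (2 * L))))).
rewrite rsum_scal rsum_const.
by have := Rmult_le_compat_l _ _ _ loss_ge0 len_le; lra.
Qed.

Lemma ln2_le_1 : ln 2 <= 1.
Proof. by rewrite -{1}(ln_exp 1); apply: ln_le; [lra | have := exp_ineq1_le 1; lra]. Qed.

(* With u = L^(1/6): ln (2L) <= 6u and T <= u^2, while L = u^6.  The constant
   109/500 = 1/2 - 1/4 - 4/125 is the slack left in cos_large_count_ge. *)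
Lemma cube_root_log_sq_le T L : 0 < L -> 200 <= ln L -> T <= Rpower L (1 / 3) ->
  T * ln (2 * L) ^ 2 + ln (2 * L) <= 109 / 500 * L - 1 / 2.
Proof.
move=> L_pos lnL_ge T_le.
set u := Rpower L (1 / 6).
have u_pos : 0 < u by apply: exp_pos.
have u6 : u ^ 6 = L.
  rewrite /u -Rpower_pow // Rpower_mult; have -> : 1 / 6 * INR 6 = 1 by rewrite [INR 6]/=; field.
  exact: Rpower_1.
have u2 : Rpower L (1 / 3) = u ^ 2.
  by rewrite /u -Rpower_pow // Rpower_mult; f_equal; rewrite [INR 2]/=; field.
have ln_u : ln u = ln L / 6 by rewrite /u ln_Rpower; field.
have u_ge : 1 + ln L / 6 <= u by rewrite -ln_u; have := exp_ineq1_le (ln u); rewrite exp_ln.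
have ln2L : ln (2 * L) = ln 2 + ln L by rewrite ln_mult; lra.
have ln2_le1 := ln2_le_1.
have ln2_pos : 0 < ln 2 by rewrite -ln_1; apply: ln_increasing; lra.
rewrite u2 in T_le; set ell := ln (2 * L).
have ell_range : 0 <= ell <= 6 * u by rewrite /ell ln2L; lra.
have u_ge34 : 34 <= u by lra.
have ell_sq : ell ^ 2 <= 36 * u ^ 2 by nra.
have T_ell_sq : T * ell ^ 2 <= u ^ 2 * ell ^ 2 by apply: Rmult_le_compat_r; nra.
have : u ^ 2 * ell ^ 2 <= u ^ 2 * (36 * u ^ 2) by apply: Rmult_le_compat_l; nra.
have : 36 * u ^ 4 + 6 * u + 1 / 2 <= 109 / 500 * u ^ 6.
  have -> : u ^ 4 = u ^ 2 * u ^ 2 by ring.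
  have -> : u ^ 6 = u ^ 2 * u ^ 2 * u ^ 2 by ring.
  have u2_ge : 34 * u <= u ^ 2 by nra.
  have : 1156 * (u ^ 2 * u ^ 2) <= u ^ 2 * u ^ 2 * u ^ 2 by nra.
  nra.
rewrite -u6; nra.
Qed.

(* With eps = 1/(1000 ln^2 (2L)) the integers near zeros of cos number about
   32 L eps ln (2L) = 4L / (125 ln (2L)), a small fraction of the primes. *)
Lemma cos_large_count_ge tau L : 1 <= L -> 200 <= ln L -> Rabs tau <= Rpower L (1 / 3) ->
  L / (4 * ln (2 * L)) <= rsum (seq 0 (S (Z.to_nat (up (2 * L)))))
                           (cos_large_prime_ind tau L (/ (1000 * ln (2 * L) ^ 2))).
Proof.
move=> L_ge1 lnL_ge tau_le.
have L_ge : 201 <= L by have := exp_ineq1_le (ln L); rewrite exp_ln; lra.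
set ell := ln (2 * L); set eps := / (1000 * ell ^ 2); set range := seq 0 _.
have ell_ge : ln L <= ell by apply: ln_le; lra.
have eps_ell : 8 * eps * ell <= 1.
  rewrite /eps; apply: (Rmult_le_reg_r (1000 * ell)); first lra.
  by field_simplify; [nra | lra].
have eps_pos : 0 < eps by apply: Rinv_0_lt_compat; nra.
have split_count := rsum_le range _ _ (fun l _ => prime_ind_le tau L eps l).
rewrite rsum_plus in split_count.
have := prime_count_ge L ltac:(lra).
have := cos_small_count_le (Rabs tau) L eps (S (Z.to_nat (up (2 * L))))
          (Rabs_pos tau) ltac:(lra) eps_pos eps_ell.
have := cube_root_log_sq_le (Rabs tau) L ltac:(lra) lnL_ge tau_le.
rewrite -/ell -/range => tau_small small_le prime_ge.
set iE := / ell; have iE_ell : iE * ell = 1 by rewrite /iE Rinv_l; lra.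
have iE_pos : 0 < iE by apply: Rinv_0_lt_compat; lra.
have -> : L / (4 * ell) = L * iE / 4 by rewrite /iE; field; lra.
have prime_eq : (L - 1) / (2 * ell) = (L - 1) * iE / 2 by rewrite /iE; field; lra.
have small_eq : 32 * L * eps * ell = 4 / 125 * L * iE by rewrite /eps /iE; field; lra.
have tail_eq : Rabs tau * ell + 1 = (Rabs tau * ell ^ 2 + ell) * iE.
  by rewrite /iE; field; lra.
have := Rmult_le_compat_r _ _ _ (Rlt_le _ _ iE_pos) tau_small.
lra.
Qed.

Lemma main_term_dominates c L G d : 0 < c -> 1 <= L -> 16000 * (12 * c + 1) <= ln L ->
  L / (4 * ln (2 * L)) <= G -> 0 <= d <= c / ln L ^ 7 ->
  L / ln L ^ 6 <= 2 * / (1000 * ln (2 * L) ^ 2) * G - 6 * L * (d * ln (2 * L)).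
Proof.
move=> c_pos L_ge1 lnL_ge G_ge d_range.
set lam := ln L in lnL_ge d_range *; set ell := ln (2 * L) in G_ge *.
have ell_eq : ell = ln 2 + lam by rewrite /ell /lam ln_mult; lra.
have ell_range : lam <= ell <= 2 * lam by have := ln_lt_2; have := ln2_le_1; lra.
set iL := / lam; have iL_lam : iL * lam = 1 by rewrite /iL Rinv_l; lra.
have iL_pos : 0 < iL by apply: Rinv_0_lt_compat; lra.
have iL_small : iL * (16000 * (12 * c + 1)) <= 1.
  by rewrite -iL_lam; apply: Rmult_le_compat_l; lra.
have main_ge : L * iL ^ 3 / 16000 <= 2 * / (1000 * ell ^ 2) * G.
  set iE := / ell; have iE_ell : iE * ell = 1 by rewrite /iE Rinv_l; lra.
  have iE_ge : iL / 2 <= iE.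
    apply: (Rmult_le_reg_r ell); first lra.
    by rewrite iE_ell; have := Rmult_le_compat_l iL _ _ (Rlt_le _ _ iL_pos) (proj2 ell_range); lra.
  have weight_ge0 : 0 <= 2 * / (1000 * ell ^ 2).
    by apply/Rlt_le/Rmult_lt_0_compat; [lra | apply/Rinv_0_lt_compat; nra].
  have := Rmult_le_compat_l _ _ _ weight_ge0 G_ge.
  have -> : 2 * / (1000 * ell ^ 2) * (L / (4 * ell)) = L * iE ^ 3 / 2000.
    by rewrite /iE; field; lra.
  have cube_le := pow_incr (iL / 2) iE 3 ltac:(lra).
  have -> : L * iL ^ 3 / 16000 = L * (iL / 2) ^ 3 / 2000 by field.
  by have := Rmult_le_compat_l L _ _ ltac:(lra) cube_le; lra.
have loss_le : 6 * L * (d * ell) <= 12 * c * L * iL ^ 6.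
  have d_le : d <= c * iL ^ 7 by rewrite /iL pow_inv; exact: (proj2 d_range).
  have := Rmult_le_compat _ _ ell _ (proj1 d_range) ltac:(lra) d_le (proj2 ell_range).
  have -> : c * iL ^ 7 * (2 * lam) = 2 * c * iL ^ 6 * (iL * lam) by ring.
  by rewrite iL_lam => dell_le; have := Rmult_le_compat_l (6 * L) _ _ ltac:(lra) dell_le; lra.
have -> : L / lam ^ 6 = L * iL ^ 6 by rewrite /iL; field; lra.
have cube_small : iL ^ 3 * (16000 * (12 * c + 1)) <= 1.
  have -> : iL ^ 3 * (16000 * (12 * c + 1)) = iL ^ 2 * (iL * (16000 * (12 * c + 1))) by ring.
  have : iL ^ 2 <= 1 by nra.
  nra.
have := Rmult_le_compat_l (L * iL ^ 3) _ _ ltac:(have := pow_lt iL 3 iL_pos; nra) cube_small.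
have -> : L * iL ^ 3 * (iL ^ 3 * (16000 * (12 * c + 1)))
          = 16000 * (L * iL ^ 6 + 12 * c * L * iL ^ 6) by ring.
lra.
Qed.

Theorem lemma2p4 :
  forall c : R, 0 < c ->
  exists C0 : R, exists L0 : R, 0 < C0 /\
    forall L t tau : R, 1 <= L -> L0 <= L ->
      Rabs (t - tau) <= c / (ln L) ^ 7 ->
      Rabs tau <= Rpower L (1 / 3) ->
      Im (B tau L ((0%R, t) : C)) = 0 /\
      C0 * L / (ln L) ^ 6 <= Re (B tau L ((0%R, t) : C)).
Proof.
move=> c c_pos; exists 1, (exp (16000 * (12 * c + 1) + 200)); split; first lra.
move=> L t tau L_ge1 L_ge t_near tau_le; rewrite B_imag_eq_rsum; split; first by [].
have lnL_ge : 16000 * (12 * c + 1) + 200 <= ln L.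
  by rewrite -(ln_exp (16000 * (12 * c + 1) + 200)); apply: ln_le; [apply: exp_pos | lra].
have L_ge2 : 2 <= L by have := exp_ineq1_le (16000 * (12 * c + 1) + 200); lra.
have count_ge := cos_large_count_ge tau L L_ge1 ltac:(lra) tau_le.
apply: Rle_trans (B_sum_ge tau t L _ L_ge2); rewrite Rmult_1_l.
by apply: (main_term_dominates c) => //; [lra | split; [exact: Rabs_pos | lra]].
Qed.
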